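(* For every $k\in[-\pi,\pi)$, the eigenspace $\{u\in\ell^2(\mathbb Z;\mathbb C^6):\hat H_{\mathrm I}(k)u=0\}$ is even-dimensional.
   Context: Parameters $b_\pm>0$, $\delta_\pm$ with $b_\pm+\delta_\pm>0$, $c>0$. For $n\in\mathbb Z$ let $b_n=b_+$ ($n\ge0$), $b_n=b_-$ ($n\le-1$); $c_n=b_++\delta_+$ ($n\ge0$), $c_{-1}=c$, $c_n=b_-+\delta_-$ ($n\le-2$); $d_n=b_++\delta_+$ ($n\ge0$), $d_n=b_-+\delta_-$ ($n\le-1$). $\hat H_{\mathrm I}(k)$ acts on $u=\{(u_{j,n})_{j=1}^6\}_{n\in\mathbb Z}\in\ell^2(\mathbb Z;\mathbb C^6)$ by $(\hat H_{\mathrm I}(k)u)_{1,n}=-b_nu_{4,n}-b_nu_{5,n}-c_{n-1}e^{-ik}u_{6,n-1}$, $(\hat H_{\mathrm I}(k)u)_{2,n}=-b_nu_{4,n}-d_ne^{ik}u_{5,n}-b_nu_{6,n}$, $(\hat H_{\mathrm I}(k)u)_{3,n}=-c_nu_{4,n+1}-b_nu_{5,n}-b_nu_{6,n}$, $(\hat H_{\mathrm I}(k)u)_{4,n}=-b_nu_{1,n}-b_nu_{2,n}-c_{n-1}u_{3,n-1}$, $(\hat H_{\mathrm I}(k)u)_{5,n}=-b_nu_{1,n}-d_ne^{-ik}u_{2,n}-b_nu_{3,n}$, $(\hat H_{\mathrm I}(k)u)_{6,n}=-c_ne^{ik}u_{1,n+1}-b_nu_{2,n}-b_nu_{3,n}$.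 *)

From HB Require Import structures.
From mathcomp Require Import all_boot all_order all_algebra.
From mathcomp Require Import reals trigo.
From mathcomp Require Import complex.
Set Implicit Arguments. Unset Strict Implicit. Unset Printing Implicit Defensive.
Import Order.TTheory GRing.Theory Num.Theory.
Local Open Scope ring_scope.
Local Open Scope complex_scope.

Section HI.
Variable R : realType.
Local Notation C := R[i].

(* a state u = {(u_{j,n})_{j=1..6}}_{n in Z}; component j=1..6 is index j-1 : 'I_6 *)
Definition state := int -> 'I_6 -> C.

Variables (bp bm dp dm c : R).

Definition bn (n : int) : R := if (0 <= n) then bp else bm.
Definition cn (n : int) : R :=
  if (0 <= n) then bp + dp else if n == -1 then c else bm + dm.
Definition dn (n : int) : R := if (0 <= n) then bp + dp else bm + dm.

Definition expik (k : R) : C := (cos k) +i* (sin k).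
Definition expmik (k : R) : C := (cos k) -i* (sin k).

Definition HI (k : R) (u : state) : state := fun n j =>
  let b := (bn n)%:C in
  let u' (jj : nat) (m : int) := u m (inord jj) in
  match nat_of_ord j with
  | 0 => - b * u' 3 n - b * u' 4 n - (cn (n - 1))%:C * expmik k * u' 5 (n - 1)
  | 1 => - b * u' 3 n - (dn n)%:C * expik k * u' 4 n - b * u' 5 n
  | 2 => - (cn n)%:C * u' 3 (n + 1) - b * u' 4 n - b * u' 5 n
  | 3 => - b * u' 0 n - b * u' 1 n - (cn (n - 1))%:C * u' 2 (n - 1)
  | 4 => - b * u' 0 n - (dn n)%:C * expmik k * u' 1 n - b * u' 2 n
  | _ => - (cn n)%:C * expik k * u' 0 (n + 1) - b * u' 1 n - b * u' 2 n
  end.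

End HI.

Definition is_l2 (R : realType) (u : state R) : Prop :=
  exists M : R, forall N : nat,
    \sum_(i < (2 * N).+1) \sum_(j < 6) (complex.Re (u (i%:Z - N%:Z)%R j) ^+ 2 + complex.Im (u (i%:Z - N%:Z)%R j) ^+ 2) <= M.

Definition kerHI (R : realType) (bp bm dp dm c k : R) (u : state R) : Prop :=
  is_l2 u /\ forall n j, HI bp bm dp dm c k u n j = 0.

Definition has_dim (R : realType) (S : state R -> Prop) (d : nat) : Prop :=
  exists v : 'I_d -> state R,
    (forall i, S (v i)) /\
    (forall a : 'I_d -> R[i],
        (forall n j, \sum_(i < d) a i * v i n j = 0) -> forall i, a i = 0) /\
    (forall u, S u -> exists a : 'I_d -> R[i],
        forall n j, u n j = \sum_(i < d) a i * v i n j).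

From HB Require Import structures.
From mathcomp Require Import all_boot all_order all_algebra.
From mathcomp Require Import boolp reals trigo complex.
From mathcomp Require Import ring.
Set Implicit Arguments. Unset Strict Implicit. Unset Printing Implicit Defensive.
Import Order.TTheory GRing.Theory Num.Theory.
Local Open Scope ring_scope.
Local Open Scope complex_scope.

(* H = \hat H_I(k) is bipartite: it maps the components 1-3 (sublattice A,
   [sublatA]) to the components 4-6 (sublattice B) and vice versa.  Hence its
   kernel is the direct sum of the kernel vectors supported on A and of those
   supported on B.  The antiunitary map [twist],
   u_{j,n} |-> e^{-ink} conj(u_{j+-3,n}), commutes with H and exchanges the two
   summands, so they have the same dimension m and the kernel has dimension 2m.
   Finally m is finite (indeed m <= 2): for u supported on B, the A-rows of
   H u = 0 form a first-order recursion in n, so such a kernel vector is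
   determined by (u_{5,0}, u_{6,0}). *)

Section Dimension.
Variable R : realType.
Local Notation C := R[i].
Local Notation state := (state R).

Definition lincomb m (a : 'I_m -> C) (v : 'I_m -> state) : state :=
  fun n j => \sum_(i < m) a i * v i n j.

Definition samples n (p : 'I_n -> int * 'I_6) m (v : 'I_m -> state) : 'M[C]_(m, n) :=
  \matrix_(i, q) v i (p q).1 (p q).2.

Definition determined_by (S : state -> Prop) n (p : 'I_n -> int * 'I_6) :=
  forall u m (a : 'I_m -> C) v, S u -> (forall i, S (v i)) ->
    (forall q, u (p q).1 (p q).2 = lincomb a v (p q).1 (p q).2) ->
  forall x j, u x j = lincomb a v x j.

Lemma determined_finite_dim (S : state -> Prop) n (p : 'I_n -> int * 'I_6) :
  determined_by S p -> exists d, has_dim S d.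
Proof.
move=> detS.
(* A maximal family in [S] with linearly independent samples is a basis. *)
pose free_family r := exists v : 'I_r -> state,
  (forall i, S (v i)) /\ row_free (samples p v).
have free0 : `[< free_family 0 >].
  apply/asboolP; exists (fun _ _ _ => 0); split; first by case.
  by rewrite /row_free flatmx0 mxrank0.
have free_le r : `[< free_family r >] -> (r <= n)%N.
  by case/asboolP=> v [_ /eqP <-]; apply: rank_leq_col.
case: (ex_maxnP (ex_intro _ 0%N free0) free_le) => d /asboolP[v [Sv freev]] maxd.
exists d, v; split; [exact: Sv | split].
- move=> a ha; have: \row_i a i *m samples p v = 0 *m samples p v.
    apply/rowP => q; rewrite mul0mx !mxE -[RHS](ha (p q).1 (p q).2).
    by apply: eq_bigr => i _; rewrite !mxE.
  by move/(row_free_inj freev)/rowP => az i; have := az i; rewrite !mxE.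
- move=> u Su; pose su := \row_q u (p q).1 (p q).2.
  have : (su <= samples p v)%MS.
    apply: contraT => su_notin.
    pose w (i : 'I_(d + 1)) := match split i with inl i => v i | inr _ => u end.
    suff : `[< free_family (d + 1)%N >] by move/maxd; rewrite addn1 ltnn.
    apply/asboolP; exists w; split; first by move=> i; rewrite /w; case: split.
    have -> : samples p w = col_mx (samples p v) su.
      by apply/matrixP => i q; rewrite !mxE /w; case: split => i'; rewrite !mxE.
    have ltv : (samples p v < col_mx (samples p v) su)%MS.
      by rewrite ltmxE -!addsmxE addsmxSl addsmx_sub submx_refl.
    have := rank_ltmx ltv; rewrite (eqP freev) /row_free eqn_leq rank_leq_row.
    by move=> ltd; rewrite -addn1 in ltd.
  case/submxP => D suD; exists (fun i => D 0 i) => x j; apply: detS => // q.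
  have /rowP/(_ q) := suD; rewrite !mxE => ->.
  by apply: eq_bigr => i _; rewrite !mxE.
Qed.

Definition supported_on (Q : pred 'I_6) (u : state) :=
  forall n j, ~~ Q j -> u n j = 0.

Definition restrict (Q : pred 'I_6) (u : state) : state :=
  fun n j => if Q j then u n j else 0.

Lemma has_dim_supp_sum (S S1 S2 : state -> Prop) (Q : pred 'I_6) m1 m2 :
    (forall u, S1 u -> S u /\ supported_on Q u) ->
    (forall u, S2 u -> S u /\ supported_on (predC Q) u) ->
    (forall u, S u -> S1 (restrict Q u) /\ S2 (restrict (predC Q) u)) ->
  has_dim S1 m1 -> has_dim S2 m2 -> has_dim S (m1 + m2).
Proof.
move=> S1S S2S Ssplit [v1 [Sv1 [free1 span1]]] [v2 [Sv2 [free2 span2]]].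
pose w i := match split i with inl i => v1 i | inr i => v2 i end.
have sum_split (a : 'I_(m1 + m2) -> C) x j :
    \sum_i a i * w i x j =
    lincomb (fun i => a (lshift m2 i)) v1 x j +
    lincomb (fun i => a (rshift m1 i)) v2 x j.
  rewrite big_split_ord /w; congr (_ + _); apply: eq_bigr => i _.
    by rewrite (unsplitK (inl i)).
  by rewrite (unsplitK (inr i)).
have v1_off i x j : ~~ Q j -> v1 i x j = 0 by apply: (S1S _ (Sv1 i)).2.
have v2_on i x j : Q j -> v2 i x j = 0.
  by move=> Qj; apply: (S2S _ (Sv2 i)).2; rewrite negbK.
exists w; split; [|split].
- move=> i; rewrite /w; case: split => i'.
    exact: (S1S _ (Sv1 i')).1.
  exact: (S2S _ (Sv2 i')).1.
- move=> a aw0.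
  have a1 : forall i, a (lshift m2 i) = 0.
    apply: free1 => x j; have [Qj | nQj] := boolP (Q j).
      have := aw0 x j; rewrite sum_split [lincomb _ v2 x j]big1 ?addr0 //.
      by move=> i _; rewrite v2_on ?mulr0.
    by apply: big1 => i _; rewrite v1_off ?mulr0.
  have a2 : forall i, a (rshift m1 i) = 0.
    apply: free2 => x j; have [Qj | nQj] := boolP (Q j).
      by apply: big1 => i _; rewrite v2_on ?mulr0.
    have := aw0 x j; rewrite sum_split [lincomb _ v1 x j]big1 ?add0r //.
    by move=> i _; rewrite v1_off ?mulr0.
  by move=> i; rewrite -(splitK i); case: split => i' /=; [apply: a1 | apply: a2].
- move=> u Su; have [S1u S2u] := Ssplit u Su.
  have [a1 ua1] := span1 _ S1u; have [a2 ua2] := span2 _ S2u.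
  exists (fun i => match split i with inl i => a1 i | inr i => a2 i end) => x j.
  rewrite sum_split /lincomb /=.
  under eq_bigr do rewrite (unsplitK (inl _)).
  under [X in _ + X]eq_bigr do rewrite (unsplitK (inr _)).
  rewrite -ua1 -ua2 /restrict /=.
  by case: (Q j); rewrite ?addr0 ?add0r.
Qed.

Lemma has_dim_antilinear (T : state -> state) (S S' : state -> Prop) m :
    (forall u r (a : 'I_r -> C) v, (forall x j, u x j = lincomb a v x j) ->
       forall x j, T u x j = lincomb (fun i => conjc (a i)) (fun i => T (v i)) x j) ->
    (forall u x j, T (T u) x j = u x j) ->
    (forall u, S u -> S' (T u)) -> (forall u, S' u -> S (T u)) ->
  has_dim S m -> has_dim S' m.
Proof.
move=> Tanti TK TS TS' [v [Sv [freev spanv]]].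
exists (fun i => T (v i)); split; [by move=> i; apply: TS | split].
- move=> b bTv0.
  pose y := lincomb (fun i => conjc (b i)) v.
  have Ty0 x j : T y x j = lincomb (fun _ : 'I_0 => 0) (fun _ => y) x j.
    rewrite (Tanti y _ _ _ (fun _ _ => erefl)) /lincomb big_ord0 -[RHS](bTv0 x j).
    by apply: eq_bigr => i _; rewrite conjcK.
  have y0 x j : y x j = 0.
    by rewrite -TK (Tanti _ _ _ _ Ty0) /lincomb big_ord0.
  by move=> i; rewrite -[b i]conjcK (freev _ y0) rmorph0.
- move=> u S'u; have [a Tua] := spanv _ (TS' u S'u).
  exists (fun i => conjc (a i)) => x j.
  by rewrite -TK (Tanti _ _ _ _ Tua).
Qed.
End Dimension.

Section UnitCircle.
Variable R : realType.
Local Notation C := R[i].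

Lemma complexM (a b c d : R) :
  (a +i* b) * (c +i* d) = (a * c - b * d) +i* (a * d + b * c).
Proof. by []. Qed.

Lemma expmikD (x y : R) : expmik (x + y) = expmik x * expmik y.
Proof. by rewrite /expmik complexM cosD sinD; congr (_ +i* _); ring. Qed.

Lemma expmikN (x : R) : expmik (- x) = expik x.
Proof. by rewrite /expmik /expik cosN sinN opprK. Qed.

Lemma conjcB (y z : C) : conjc (y - z) = conjc y - conjc z.
Proof. exact: rmorphB. Qed.

Lemma conjcN (z : C) : conjc (- z) = - conjc z.
Proof. exact: rmorphN. Qed.

Lemma conjcM (y z : C) : conjc (y * z) = conjc y * conjc z.
Proof. exact: rmorphM. Qed.

Lemma conjc_expmik (x : R) : conjc (expmik x) = expik x.
Proof. by rewrite /= opprK. Qed.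

Lemma conjc_expik (x : R) : conjc (expik x) = expmik x.
Proof. by []. Qed.

Lemma expmik_expik (x : R) : expmik x * expik x = 1.
Proof.
rewrite /expmik /expik complexM (_ : 1 = 1 +i* 0) //.
by congr (_ +i* _); [rewrite -(cos2Dsin2 x) | ]; ring.
Qed.

Definition sqnorm (z : C) : R := complex.Re z ^+ 2 + complex.Im z ^+ 2.

Lemma sqnormM (y z : C) : sqnorm (y * z) = sqnorm y * sqnorm z.
Proof. by case: y z => [a b] [c d]; rewrite complexM /sqnorm /=; ring. Qed.

Lemma sqnorm_conjc (z : C) : sqnorm (conjc z) = sqnorm z.
Proof. by case: z => a b; rewrite /sqnorm /= sqrrN. Qed.

Lemma sqnorm_expmik (x : R) : sqnorm (expmik x) = 1.
Proof. by rewrite /sqnorm /= sqrrN cos2Dsin2. Qed.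

Lemma sqnorm0 : sqnorm 0 = 0.
Proof. by rewrite /sqnorm /= expr0n addr0. Qed.

Lemma sqnorm_ge0 (z : C) : 0 <= sqnorm z.
Proof. by rewrite addr_ge0 ?sqr_ge0. Qed.

Lemma opp_realC_neq0 (x : R) : 0 < x -> - x%:C != 0.
Proof. by move=> x_gt0; rewrite oppr_eq0 eq_complex /= eqxx andbT gt_eqF. Qed.

Lemma expmik_neq0 (x : R) : expmik x != 0.
Proof.
apply/eqP => e0; have := expmik_expik x.
by rewrite e0 mul0r => /eqP; rewrite eq_sym oner_eq0.
Qed.

End UnitCircle.


Section Hamiltonian.
Variables (R : realType) (bp bm dp dm c k : R).
Local Notation C := R[i].
Local Notation state := (state R).
Local Notation H := (HI bp bm dp dm c k).

Definition flip (j : 'I_6) : 'I_6 :=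
  inord (match val j with 0 => 3 | 1 => 4 | 2 => 5 | 3 => 0 | 4 => 1 | _ => 2 end).

Lemma flipK : involutive flip.
Proof.
by case=> [[|[|[|[|[|[|j]]]]]] hj] //; apply/val_inj; rewrite /flip /= !inordK.
Qed.

Definition phase (n : int) : C := expmik (n%:~R * k).

Lemma phaseD1 n : phase (n + 1) = phase n * expmik k.
Proof. by rewrite /phase intrD mulr1z mulrDl mul1r expmikD. Qed.

Lemma phaseB1 n : phase (n - 1) = phase n * expik k.
Proof. by rewrite /phase intrB mulr1z mulrBl mul1r expmikD expmikN. Qed.

Lemma phase_conjc n : phase n * conjc (phase n) = 1.
Proof. by rewrite conjc_expmik expmik_expik. Qed.

Definition twist (u : state) : state := fun n j => phase n * conjc (u n (flip j)).

Lemma HI_twist (u : state) n j : H (twist u) n j = phase n * conjc (H u n (flip j)).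
Proof.
case: j => [[|[|[|[|[|[|j]]]]]] hj] //; rewrite /HI /twist /flip /= !inordK //=.
all: rewrite !(conjcB, conjcN, conjcM) !conjc_real.
all: rewrite ?conjc_expmik ?conjc_expik ?phaseB1 ?phaseD1; ring: (expmik_expik k).
Qed.

Lemma twistK (u : state) n j : twist (twist u) n j = u n j.
Proof. by rewrite /twist conjcM conjcK flipK mulrA phase_conjc mul1r. Qed.

Lemma twist_antilinear (u : state) r (a : 'I_r -> C) v :
    (forall x j, u x j = lincomb a v x j) ->
  forall x j, twist u x j = lincomb (fun i => conjc (a i)) (fun i => twist (v i)) x j.
Proof.
move=> uav x j; rewrite /twist uav /lincomb rmorph_sum mulr_sumr.
by apply: eq_bigr => i _; rewrite rmorphM mulrCA.
Qed.

Definition row_sqnorm (u : state) n := \sum_(j < 6) sqnorm (u n j).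

Lemma is_l2_le (u v : state) :
  (forall n, row_sqnorm v n <= row_sqnorm u n) -> is_l2 u -> is_l2 v.
Proof.
move=> le_vu [M uM]; exists M => N; apply: le_trans (uM N).
by apply: ler_sum => i _; apply: le_vu.
Qed.

Lemma is_l2_restrict (Q : pred 'I_6) (u : state) : is_l2 u -> is_l2 (restrict Q u).
Proof.
apply: is_l2_le => n; apply: ler_sum => j _; rewrite /restrict.
by case: (Q j); rewrite ?sqnorm0 ?sqnorm_ge0.
Qed.

Lemma is_l2_twist (u : state) : is_l2 u -> is_l2 (twist u).
Proof.
apply: is_l2_le => n; rewrite [leRHS](reindex_inj (inv_inj flipK)).
by apply: ler_sum => j _; rewrite sqnormM sqnorm_conjc sqnorm_expmik mul1r.
Qed.

Definition sublatA : pred 'I_6 := fun j => (j < 3)%N.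

Lemma sublatA_flip j : sublatA (flip j) = ~~ sublatA j.
Proof. by case: j => [[|[|[|[|[|[|j]]]]]] hj] //; rewrite /sublatA /flip /= inordK. Qed.

Lemma HI_restrictA (u : state) n j :
  H (restrict sublatA u) n j = if sublatA j then 0 else H u n j.
Proof.
by case: j => [[|[|[|[|[|[|j]]]]]] hj] //; rewrite /HI /restrict /sublatA /= !inordK //=; ring.
Qed.

Lemma HI_restrictB (u : state) n j :
  H (restrict (predC sublatA) u) n j = if sublatA j then H u n j else 0.
Proof.
by case: j => [[|[|[|[|[|[|j]]]]]] hj] //; rewrite /HI /restrict /sublatA /= !inordK //=; ring.
Qed.

Lemma HI_sub (u w : state) n j : H (fun x i => u x i - w x i) n j = H u n j - H w n j.
Proof. by case: j => [[|[|[|[|[|[|j]]]]]] hj] //; rewrite /HI /=; ring. Qed.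

Lemma HI_lincomb r (a : 'I_r -> C) v n j :
  H (lincomb a v) n j = lincomb a (fun i => H (v i)) n j.
Proof.
case: j => [[|[|[|[|[|[|j]]]]]] hj] //; rewrite /HI /lincomb /= !mulr_sumr -!sumrB.
all: by apply: eq_bigr => i _; ring.
Qed.

Definition kerA (u : state) := kerHI bp bm dp dm c k u /\ supported_on sublatA u.
Definition kerB (u : state) := kerHI bp bm dp dm c k u /\ supported_on (predC sublatA) u.

Lemma kerHI_restrict (u : state) : kerHI bp bm dp dm c k u ->
  kerA (restrict sublatA u) /\ kerB (restrict (predC sublatA) u).
Proof.
case=> l2u Hu; split; split; try split.
- exact: is_l2_restrict.
- by move=> n j; rewrite HI_restrictA Hu; case: ifP.
- by move=> n j /negbTE nAj; rewrite /restrict nAj.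
- exact: is_l2_restrict.
- by move=> n j; rewrite HI_restrictB Hu; case: ifP.
- by move=> n j /negbTE; rewrite /restrict => ->.
Qed.

Lemma kerHI_twist (u : state) : kerHI bp bm dp dm c k u -> kerHI bp bm dp dm c k (twist u).
Proof.
case=> l2u Hu; split=> [|n j]; first exact: is_l2_twist.
by rewrite HI_twist Hu conjc0 mulr0.
Qed.

Lemma twist_kerB (u : state) : kerB u -> kerA (twist u).
Proof.
case=> keru uB; split=> [|n j nAj]; first exact: kerHI_twist.
by rewrite /twist uB ?conjc0 ?mulr0 //= sublatA_flip negbK.
Qed.

Lemma twist_kerA (u : state) : kerA u -> kerB (twist u).
Proof.
case=> keru uA; split=> [|n j /negPn Aj]; first exact: kerHI_twist.
by rewrite /twist uA ?conjc0 ?mulr0 // sublatA_flip negbK.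
Qed.

Hypotheses (hbp : 0 < bp) (hbm : 0 < bm) (hdp : 0 < bp + dp) (hdm : 0 < bm + dm)
  (hc : 0 < c).

Lemma bn_gt0 n : 0 < bn bp bm n.
Proof. by rewrite /bn; case: ifP. Qed.

Lemma cn_gt0 n : 0 < cn bp bm dp dm c n.
Proof. by rewrite /cn; case: ifP => // _; case: ifP. Qed.

Section Transfer.
Variable w : state.
Hypothesis wA : forall n j, sublatA j -> H w n j = 0.

Let rowA j n : (j < 3)%N -> H w n (inord j) = 0.
Proof. by move=> ltj; apply: wA; rewrite /sublatA inordK //; apply: ltn_trans ltj _. Qed.

Lemma transfer_head n : w n (inord 4) = 0 -> w n (inord 5) = 0 -> w n (inord 3) = 0.
Proof.
move=> w4 w5; have := @rowA 1 n isT; rewrite /HI !inordK //= w4 w5 => E.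
by apply: (mulfI (opp_realC_neq0 (bn_gt0 n))); rewrite mulr0 -[RHS]E; ring.
Qed.

Lemma transfer_succ n : w n (inord 4) = 0 -> w n (inord 5) = 0 ->
  w (n + 1) (inord 4) = 0 /\ w (n + 1) (inord 5) = 0.
Proof.
move=> w4 w5.
have w3' : w (n + 1) (inord 3) = 0.
  have := @rowA 2 n isT; rewrite /HI !inordK //= w4 w5 => E.
  by apply: (mulfI (opp_realC_neq0 (cn_gt0 n))); rewrite mulr0 -[RHS]E; ring.
have w4' : w (n + 1) (inord 4) = 0.
  have := @rowA 0 (n + 1) isT; rewrite /HI !inordK //= addrK w3' w5 => E.
  by apply: (mulfI (opp_realC_neq0 (bn_gt0 (n + 1)))); rewrite mulr0 -[RHS]E; ring.
split=> //; have := @rowA 1 (n + 1) isT; rewrite /HI !inordK //= w3' w4' => E.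
by apply: (mulfI (opp_realC_neq0 (bn_gt0 (n + 1)))); rewrite mulr0 -[RHS]E; ring.
Qed.

Lemma transfer_pred n : w n (inord 4) = 0 -> w n (inord 5) = 0 ->
  w (n - 1) (inord 4) = 0 /\ w (n - 1) (inord 5) = 0.
Proof.
move=> w4 w5; have w3 := transfer_head w4 w5.
have w5' : w (n - 1) (inord 5) = 0.
  have := @rowA 0 n isT; rewrite /HI !inordK //= w3 w4 => E.
  have cn_e_neq0 := mulf_neq0 (opp_realC_neq0 (cn_gt0 (n - 1))) (expmik_neq0 k).
  by apply: (mulfI cn_e_neq0); rewrite mulr0 -[RHS]E; ring.
split=> //; have := @rowA 2 (n - 1) isT; rewrite /HI !inordK //= subrK w3 w5' => E.
by apply: (mulfI (opp_realC_neq0 (bn_gt0 (n - 1)))); rewrite mulr0 -[RHS]E; ring.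
Qed.

End Transfer.

Lemma kerB_eq0 (w : state) : supported_on (predC sublatA) w ->
    (forall n j, sublatA j -> H w n j = 0) ->
    w 0 (inord 4) = 0 -> w 0 (inord 5) = 0 ->
  forall n j, w n j = 0.
Proof.
move=> wB wA w4 w5.
have w45 n : w n (inord 4) = 0 /\ w n (inord 5) = 0.
  elim/int_ind: n => [|n [w4n w5n]|n [w4n w5n]]; first by [].
    by rewrite intS addrC; apply: transfer_succ.
  by rewrite intS opprD addrC; apply: transfer_pred.
move=> n j; have [Aj | nAj] := boolP (sublatA j); first by apply: wB; rewrite /= negbK.
have [w4n w5n] := w45 n; have w3n := transfer_head wA w4n w5n.
case: j nAj => [[|[|[|[|[|[|j]]]]]] hj] // _.
all: by rewrite -[Ordinal _]inord_val.
Qed.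

Definition kerB_samples (q : 'I_2) : int * 'I_6 := (0, inord (4 + q)).

Lemma kerB_determined : determined_by kerB kerB_samples.
Proof.
move=> u r a v [[_ Hu] uB] vB uav x j.
apply/eqP; rewrite -subr_eq0; apply/eqP; move: x j.
apply: (kerB_eq0 (w := fun x j => u x j - lincomb a v x j)).
- move=> n i nBi; rewrite uB // /lincomb big1 ?subr0 // => l _.
  by rewrite (vB l).2 ?mulr0.
- move=> n i _; rewrite HI_sub HI_lincomb Hu /lincomb big1 ?subr0 // => l _.
  by rewrite (vB l).1.2 mulr0.
- by apply/eqP; rewrite subr_eq0; apply/eqP; exact: (uav ord0).
- by apply/eqP; rewrite subr_eq0; apply/eqP; exact: (uav ord_max).
Qed.

End Hamiltonian.

Theorem proposition2 (R : realType) (bp bm dp dm c : R)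
  (hbp : 0 < bp) (hbm : 0 < bm) (hdp : 0 < bp + dp) (hdm : 0 < bm + dm)
  (hc : 0 < c) (k : R) (hk : - pi <= k < pi) :
  exists d : nat, ~~ odd d /\ has_dim (kerHI bp bm dp dm c k) d.
Proof.
have [m kerB_dim] := determined_finite_dim (kerB_determined (k := k) hbp hbm hdp hdm hc).
have kerA_dim : has_dim (kerA bp bm dp dm c k) m.
  apply: (has_dim_antilinear (@twist_antilinear _ k) (@twistK _ k)) kerB_dim.
    exact: twist_kerB.
  exact: twist_kerA.
exists (m + m)%N; split; first by rewrite addnn odd_double.
apply: (has_dim_supp_sum (Q := sublatA)) kerA_dim kerB_dim => [u []|u []|] //.
exact: kerHI_restrict.
Qed.
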